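(* For every $n\ge1$ one has $\iota_1(\mathrm{Lie}(n))\subset\mathrm{Vert}(n)$ and $\iota_1(\mathrm{Lie}_1(n))\subset\mathrm{Vert}_1(n)$.
   Context: $\mathrm{Lie}$ is the operad of Lie algebras. $\mathrm{preLie}$ is the operad of (right) pre-Lie algebras, i.e. algebras with a product $\circ$ such that $(a\circ b)\circ c-a\circ(b\circ c)$ is graded symmetric in $b,c$; equivalently, $a\circ[b,c]=(a\circ b)\circ c-(-1)^{|b||c|}(a\circ c)\circ b$ with $[b,c]=b\circ c-(-1)^{|b||c|}c\circ b$. The inclusion of operads $\iota_1\colon\mathrm{Lie}\hookrightarrow\mathrm{preLie}$ sends $[x_1,x_2]$ to $x_1\circ x_2-x_2\circ x_1$. The operads $\mathrm{Lie}_1$ and $\mathrm{preLie}_1$ are the versions with bracket, resp. pre-Lie product, of degree one (obtained by desuspension of the underlying spaces), and $\iota_1\colon\mathrm{Lie}_1\hookrightarrow\mathrm{preLie}_1$ is the corresponding super-analogue. $\mathrm{Vert}(n)\subset\mathrm{preLie}(n)$ (resp. $\mathrm{Vert}_1(n)\subset\mathrm{preLie}_1(n)$) is the $n!$-dimensional subspace spanned by the left-normed products $(\cdots((x_{\sigma_1}\circ x_{\sigma_2})\circ x_{\sigma_3})\circ\cdots)\circ x_{\sigma_n}$ for $\sigma\in S_n$. *)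

From HB Require Import structures.
From mathcomp Require Import all_boot all_order all_algebra.
From mathcomp Require Import monalg.


Unset Strict Implicit.
Unset Printing Implicit Defensive.

Import GRing.Theory.
Local Open Scope ring_scope.

(* Nonassociative monomials in the generators x_0, x_1, x_2, ... :
   binary trees with leaves labelled by generator indices.              *)
Inductive tree : Type := Leaf of nat | Node of tree & tree.

Fixpoint tree_enc (t : tree) : GenTree.tree nat :=
  match t with
  | Leaf i => GenTree.Leaf i
  | Node l r => GenTree.Node 0 [:: tree_enc l; tree_enc r]
  end.

Fixpoint tree_dec (g : GenTree.tree nat) : option tree :=
  match g with
  | GenTree.Leaf i => Some (Leaf i)
  | GenTree.Node _ [:: a; b] =>
      match tree_dec a, tree_dec b with
      | Some l, Some r => Some (Node l r)
      | _, _ => None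
      end
  | _ => None
  end.

Lemma tree_encK : pcancel tree_enc tree_dec.
Proof. by elim=> [i|l IHl r IHr] //=; rewrite IHl IHr. Qed.

HB.instance Definition _ := Countable.copy tree (pcan_type tree_encK).

Fixpoint leaves (t : tree) : seq nat :=
  match t with Leaf i => [:: i] | Node l r => leaves l ++ leaves r end.

(* The free (nonassociative) algebra on the generators x_i over K,
   as the K-vector space with basis the monomials (trees);
   the product of basis monomials s, t is the monomial Node s t. *)
Definition FM (K : fieldType) := {malg K[tree]}.

(* Parity convention: all generators have parity p (p = false: the
   ungraded/even case, giving preLie and Lie; p = true: odd generators,
   giving the degree-one operads preLie_1 and Lie_1 via suspension).                *)
Definition par (p : bool) (t : tree) : bool := p && odd (size (leaves t)).

Inductive ctx : Type :=
  | Hole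
  | CL of ctx & tree
  | CR of tree & ctx.

Fixpoint plug (c : ctx) (t : tree) : tree :=
  match c with
  | Hole => t
  | CL c' u => Node (plug c' t) u
  | CR u c' => Node u (plug c' t)
  end.

(* These elements span the two-sided ideal
   of the free algebra generated by the pre-Lie relation.              *)
Definition prelie_rel (K : fieldType) (p : bool) (C : ctx) (a b c : tree)
  : FM K :=
  (<< plug C (Node (Node a b) c) >> - << plug C (Node a (Node b c)) >>)
  - (-1) ^+ (par p b && par p c) *:
    (<< plug C (Node (Node a c) b) >> - << plug C (Node a (Node c b)) >>).

Definition in_prelie_ideal_gen (K : fieldType) (p : bool) (x : FM K) : Prop :=
  exists C a b c, x = prelie_rel K p C a b c.

Definition inSpan (K : fieldType) (P : FM K -> Prop) (x : FM K) : Prop :=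
  exists l : seq (K * FM K),
    (forall q, q \in l -> P q.2) /\ x = \sum_(q <- l) q.1 *: q.2.

(* Expansion of a Lie bracket monomial (a binary tree read as nested
   graded commutators [u,v] = u o v - (-1)^{|u||v|} v o u) as a signed
   list of nonassociative monomials; a sign bit true means coefficient -1. *)
Fixpoint lie_terms (p : bool) (t : tree) : seq (bool * tree) :=
  match t with
  | Leaf i => [:: (false, Leaf i)]
  | Node l r =>
      let e := par p l && par p r in
      [seq (q1.1 (+) q2.1, Node q1.2 q2.2)
         | q1 <- lie_terms p l, q2 <- lie_terms p r]
      ++ [seq (q1.1 (+) q2.1 (+) ~~ e, Node q2.2 q1.2)
         | q1 <- lie_terms p l, q2 <- lie_terms p r]
  end.

Definition iota_lie (K : fieldType) (p : bool) (t : tree) : FM K :=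
  \sum_(q <- lie_terms p t) (-1) ^+ q.1 *: << q.2 >>.

(* Image under iota_1 of the Lie bracket monomials of arity n (each of
   x_0, ..., x_{n-1} used exactly once); these span iota_1(Lie(n)). *)
Definition lie_mon (K : fieldType) (p : bool) (n : nat) (x : FM K) : Prop :=
  exists t : tree, perm_eq (leaves t) (iota 0 n) /\ x = iota_lie K p t.

Definition lnorm (i : nat) (s : seq nat) : tree :=
  foldl (fun a j => Node a (Leaf j)) (Leaf i) s.

(* The left-normed monomials of arity n; they span Vert(n). *)
Definition vert_mon (K : fieldType) (n : nat) (x : FM K) : Prop :=
  exists (i : nat) (s : seq nat),
    perm_eq (i :: s) (iota 0 n) /\ x = << lnorm i s >>.

(* x lies in Vert(n) modulo the pre-Lie ideal, i.e. the class of x in the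
   free (graded) pre-Lie algebra lies in Vert(n). *)
Definition in_vert_mod_prelie (K : fieldType) (p : bool) (n : nat) (x : FM K)
  : Prop :=
  inSpan K (fun y => vert_mon K n y \/ in_prelie_ideal_gen K p y) x.

From HB Require Import structures.
From mathcomp Require Import all_boot all_order all_algebra.
From mathcomp Require Import finmap monalg.

(* Modulo the pre-Lie relations, a o [b, c] = (a o b) o c - (+/-) (a o c) o b:
   right multiplication turns brackets into graded commutators of operators.
   Hence for a Lie word t, right multiplication by iota(t) is congruent to an
   operator R_t built from right multiplications by generators, and R_t maps
   a monomial k into the span of the left-normed products
   (..(k o x_j1) ..) o x_jm, (j1, ..., jm) a rearrangement of the leaves of t.
   Now write iota([u, v]) = iota(u) o iota(v) - (+/-) iota(v) o iota(u) and
   replace iota(u) by an element w of Vert, by induction: w o iota(v) is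
   congruent to R_v w, which lies in Vert again; likewise for the second
   term. *)

Import GRing.Theory.
Local Open Scope ring_scope.

Section FreeAlgebra.
Context {K : fieldType}.
Local Notation V := (FM K).
Implicit Types (P Q : V -> Prop) (f : {linear V -> V}).

Lemma inSpan0 P : inSpan K P 0.
Proof. by exists [::]; rewrite big_nil. Qed.

Lemma inSpan_mem P x : P x -> inSpan K P x.
Proof.
move=> Px; exists [:: (1, x)]; split; first by move=> q; rewrite inE => /eqP ->.
by rewrite big_seq1 scale1r.
Qed.

Lemma inSpanD P x y : inSpan K P x -> inSpan K P y -> inSpan K P (x + y).
Proof.
move=> [l1 [Pl1 ->]] [l2 [Pl2 ->]]; exists (l1 ++ l2); rewrite big_cat.
by split=> // q; rewrite mem_cat => /orP[/Pl1|/Pl2].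
Qed.

Lemma inSpanZ P c x : inSpan K P x -> inSpan K P (c *: x).
Proof.
move=> [l [Pl ->]]; exists [seq (c * q.1, q.2) | q <- l]; split.
  by move=> _ /mapP[q /Pl Pq ->].
by rewrite big_map scaler_sumr; apply: eq_bigr => q _; rewrite scalerA.
Qed.

Lemma inSpanN P x : inSpan K P x -> inSpan K P (- x).
Proof. by rewrite -scaleN1r; apply: inSpanZ. Qed.

Lemma inSpanB P x y : inSpan K P x -> inSpan K P y -> inSpan K P (x - y).
Proof. by move=> Px Py; apply/inSpanD/inSpanN. Qed.

Lemma inSpan_sum P (I : eqType) (r : seq I) (F : I -> V) :
  (forall i, i \in r -> inSpan K P (F i)) -> inSpan K P (\sum_(i <- r) F i).
Proof.
elim: r => [|i r IHr] PF; first by rewrite big_nil; apply: inSpan0.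
rewrite big_cons; apply: inSpanD; first by apply: PF; rewrite mem_head.
by apply: IHr => j rj; apply: PF; rewrite inE rj orbT.
Qed.

Lemma inSpan_linear f P Q v :
  (forall u, P u -> inSpan K Q (f u)) -> inSpan K P v -> inSpan K Q (f v).
Proof.
move=> fPQ [l [Pl ->]]; rewrite linear_sum; apply: inSpan_sum => q /Pl Pq.
by rewrite linearZ; apply/inSpanZ/fPQ.
Qed.

Lemma inSpan_trans P Q v :
  (forall u, P u -> inSpan K Q u) -> inSpan K P v -> inSpan K Q v.
Proof. exact: (inSpan_linear idfun). Qed.

Lemma inSpan_monomial v : inSpan K (fun u => exists k, u = << k >>) v.
Proof.
rewrite (monalgE v); apply: inSpan_sum => k _.
have -> : << v@_k *g k >> = v@_k *: (<< k >> : V).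
  by apply/malgP => m; rewrite mcoeffZ !mcoeffU mulr_natr.
by apply/inSpanZ/inSpan_mem; exists k.
Qed.

Lemma inSpan_linear_basis f Q v :
  (forall k, inSpan K Q (f << k >>)) -> inSpan K Q (f v).
Proof.
by move=> fQ; apply: inSpan_linear (inSpan_monomial v) => _ [k ->].
Qed.

Definition linext (g : tree -> V) (x : V) : V :=
  \sum_(k <- msupp x) x@_k *: g k.

Lemma linextEw g x (d : {fset tree}) : (msupp x `<=` d)%fset ->
  linext g x = \sum_(k <- d) x@_k *: g k.
Proof.
move=> le_xd; rewrite /linext (big_fset_incl _ le_xd) //.
by move=> k _ /mcoeff_outdom->; rewrite scale0r.
Qed.

Lemma linext_is_linear g : linear (linext g).
Proof.
move=> c x y; pose d := (msupp x `|` msupp y `|` msupp (c *: x + y))%fset.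
rewrite (linextEw _ _ d) ?fsubsetUr // (linextEw _ x d); last first.
  by rewrite /d -fsetUA fsubsetUl.
rewrite (linextEw _ y d); last by rewrite /d fsetUAC fsubsetUr.
rewrite scaler_sumr -big_split; apply: eq_bigr => k _.
by rewrite mcoeffD mcoeffZ scalerDl scalerA.
Qed.

HB.instance Definition _ g :=
  GRing.isLinear.Build K V V *:%R (linext g) (linext_is_linear g).

Lemma linextU g k : linext g << k >> = g k.
Proof.
by rewrite (linextEw _ _ _ msuppU_le) big_seq_fset1 mcoeffUU scale1r.
Qed.

Lemma eq_linext g h : g =1 h -> linext g =1 linext h.
Proof. by move=> gh x; apply: eq_bigr => k _; rewrite gh. Qed.

Lemma linext_linear_comb c g h x :
  linext (fun k => c *: g k + h k) x = c *: linext g x + linext h x.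
Proof.
rewrite /linext scaler_sumr -big_split; apply: eq_bigr => k _.
by rewrite scalerDr !scalerA mulrC.
Qed.

Definition fmul (x y : V) : V :=
  linext (fun a => linext (fun b => << Node a b >>) y) x.

Local Notation "x ** y" := (fmul x y) (at level 40, left associativity).

Lemma fmul_is_bilinear : bilinear_for *:%R *:%R fmul.
Proof.
split=> [y|x]; first exact: linext_is_linear.
move=> c y z; rewrite /fmul -linext_linear_comb.
by apply: eq_linext => a; rewrite linearP.
Qed.

HB.instance Definition _ :=
  bilinear_isBilinear.Build K V V V *:%R *:%R fmul fmul_is_bilinear.

(* The bilinear structure equips the partial applications of abstract bilinear
   maps only; these instances make composites such as [fmul x \o fmulr y]
   canonically linear. *)
HB.instance Definition _ x :=
  GRing.isLinear.Build K V V *:%R (fmul x) (fmul_is_bilinear.2 x).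

Definition fmulr (y x : V) : V := x ** y.

HB.instance Definition _ y :=
  GRing.isLinear.Build K V V *:%R (fmulr y) (fmul_is_bilinear.1 y).

Lemma fmulU a b : << a >> ** << b >> = << Node a b >> :> V.
Proof. by rewrite /fmul !linextU. Qed.

Lemma subr_linear_comb (e : K) (x1 x2 y1 y2 : V) :
  x1 - e *: x2 - (y1 - e *: y2) = x1 - y1 - e *: (x2 - y2).
Proof. by rewrite scalerBr !opprB addrACA [RHS]addrACA [- y1 + _]addrC. Qed.

Definition signed_sum (s : seq (bool * tree)) : V :=
  \sum_(q <- s) (-1) ^+ q.1 *: << q.2 >>.

Lemma fmul_signed_sum s1 s2 : signed_sum s1 ** signed_sum s2 =
  signed_sum [seq (q1.1 (+) q2.1, Node q1.2 q2.2) | q1 <- s1, q2 <- s2].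
Proof.
rewrite /signed_sum big_allpairs_dep linear_sumlz /=; apply: eq_bigr => q1 _.
rewrite linearZl_LR linear_sumr /= scaler_sumr; apply: eq_bigr => q2 _.
by rewrite linearZ /= fmulU scalerA signr_addb.
Qed.

End FreeAlgebra.

Local Notation "x ** y" := (fmul x y) (at level 40, left associativity).

Definition lnorm_tree (k : tree) (s : seq nat) : tree :=
  foldl (fun a j => Node a (Leaf j)) k s.

Lemma lnorm_tree_cat k s1 s2 :
  lnorm_tree k (s1 ++ s2) = lnorm_tree (lnorm_tree k s1) s2.
Proof. exact: foldl_cat. Qed.

Section LeftNormedSpans.
Context {K : fieldType}.
Local Notation V := (FM K).

Definition lnorm_span (k : tree) (S : seq nat) : V -> Prop :=
  inSpan K (fun u => exists s, perm_eq s S /\ u = << lnorm_tree k s >>).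

Definition vert_span (S : seq nat) : V -> Prop :=
  inSpan K (fun u =>
    exists i s, perm_eq (i :: s) S /\ u = << lnorm_tree (Leaf i) s >>).

Lemma lnorm_span_perm {k S1 S2 v} :
  perm_eq S1 S2 -> lnorm_span k S1 v -> lnorm_span k S2 v.
Proof.
move=> eqS; apply: inSpan_trans => _ [s [eq_s ->]]; apply: inSpan_mem.
by exists s; rewrite (perm_trans eq_s eqS).
Qed.

Lemma vert_span_perm {S1 S2 v} :
  perm_eq S1 S2 -> vert_span S1 v -> vert_span S2 v.
Proof.
move=> eqS; apply: inSpan_trans => _ [i [s [eq_s ->]]]; apply: inSpan_mem.
by exists i, s; rewrite (perm_trans eq_s eqS).
Qed.

Section Extension.
Context {g : tree -> V} {S : seq nat}.
Hypothesis g_lnorm : forall k, lnorm_span k S (g k).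

Lemma linext_lnorm_span k S' v :
  lnorm_span k S' v -> lnorm_span k (S' ++ S) (linext g v).
Proof.
apply: inSpan_linear => _ [s [eq_s ->]] /=; rewrite linextU.
apply: inSpan_trans (g_lnorm _) => _ [s' [eq_s' ->]]; apply: inSpan_mem.
by exists (s ++ s'); rewrite perm_cat // lnorm_tree_cat.
Qed.

Lemma linext_vert_span S' v :
  vert_span S' v -> vert_span (S' ++ S) (linext g v).
Proof.
apply: inSpan_linear => _ [i [s [eq_s ->]]] /=; rewrite linextU.
apply: inSpan_trans (g_lnorm _) => _ [s' [eq_s' ->]]; apply: inSpan_mem.
by exists i, (s ++ s'); rewrite -cat_cons perm_cat // lnorm_tree_cat.
Qed.

End Extension.
End LeftNormedSpans.

Section PreLie.
Variables (K : fieldType) (p : bool).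
Local Notation V := (FM K).
Local Notation il := (iota_lie K p).
Local Notation prelie_ideal := (inSpan K (in_prelie_ideal_gen K p)).
Local Notation "x ≡ y" := (prelie_ideal (x - y)) (at level 70).

Lemma prelie_ideal_fmulr x y : prelie_ideal x -> prelie_ideal (x ** y).
Proof.
move=> Jx; apply: (inSpan_linear_basis (fmul x)) => w.
apply: (inSpan_linear (fmulr << w >>)) Jx => _ [C [a [b [c ->]]]] /=.
apply: inSpan_mem; exists (CL C w), a, b, c.
by rewrite /fmulr /prelie_rel !linearBl linearZl_LR !linearBl /= !fmulU.
Qed.

Lemma eqv_trans y x z : x ≡ y -> y ≡ z -> x ≡ z.
Proof. by move=> Jxy Jyz; rewrite -[x](subrK y) -addrA; apply: inSpanD. Qed.

Arguments eqv_trans y {x z}.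

Lemma eqv_fmulr x y z : x ≡ y -> x ** z ≡ y ** z.
Proof. by rewrite -linearBl; apply: prelie_ideal_fmulr. Qed.

Lemma eqv_linear_comb (e : K) x1 x2 y1 y2 :
  x1 ≡ y1 -> x2 ≡ y2 -> x1 - e *: x2 ≡ y1 - e *: y2.
Proof. by rewrite subr_linear_comb => J1 J2; apply/inSpanB/inSpanZ. Qed.

Definition koszul (b c : tree) : K := (-1) ^+ (par p b && par p c).

Definition homogeneous (P : bool) : V -> Prop :=
  inSpan K (fun u => exists t, par p t = P /\ u = << t >>).

Lemma size_leaves_lie_terms t q :
  q \in lie_terms p t -> size (leaves q.2) = size (leaves t).
Proof.
elim: t q => [i|l IHl r IHr] q /=; first by rewrite inE => /eqP ->.
rewrite mem_cat => /orP[] /allpairsP[[q1 q2] [/= /IHl ql /IHr qr ->]] /=;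
  by rewrite !size_cat ql qr // addnC.
Qed.

Lemma iota_lie_homogeneous t : homogeneous (par p t) (il t).
Proof.
apply: inSpan_sum => q qt; apply/inSpanZ/inSpan_mem.
by exists q.2; rewrite /par (size_leaves_lie_terms _ _ qt).
Qed.

Lemma iota_lie_leaf i : il (Leaf i) = << Leaf i >>.
Proof. by rewrite /iota_lie big_seq1 scale1r. Qed.

Lemma iota_lie_node l r :
  il (Node l r) = il l ** il r - koszul l r *: (il r ** il l).
Proof.
rewrite [LHS]big_cat -!/(signed_sum _) !fmul_signed_sum; congr (_ + _).
rewrite /signed_sum !big_allpairs_dep exchange_big /= scaler_sumr -sumrN.
apply: eq_bigr => q1 _; rewrite scaler_sumr -sumrN; apply: eq_bigr => q2 _.
rewrite scalerA -scaleNr /koszul !signr_addb signrN mulrN.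
by rewrite [_ * (_ * _)]mulrC [(-1) ^+ q2.1 * _]mulrC.
Qed.

Lemma prelie_fmul_bracket x P1 P2 y z :
    homogeneous P1 y -> homogeneous P2 z ->
  x ** (y ** z - (-1) ^+ (P1 && P2) *: (z ** y))
    ≡ x ** y ** z - (-1) ^+ (P1 && P2) *: (x ** z ** y).
Proof.
move=> hy hz; set e := (-1) ^+ _.
(* Both sides are linear in each of x, y and z: reduce them to monomials. *)
apply: (inSpan_linear_basis (fmulr (y ** z - e *: (z ** y))
  \- (fmulr z \o fmulr y \- e \*: (fmulr y \o fmulr z)))) => a.
apply: (inSpan_linear (fmul << a >> \o (fmulr z \- e \*: fmul z)
  \- (fmulr z \o fmul << a >> \- e \*: fmul (<< a >> ** z)))) hy.
move=> _ [b [Pb ->]].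
apply: (inSpan_linear (fmul << a >> \o (fmul << b >> \- e \*: fmulr << b >>)
  \- (fmul (<< a >> ** << b >>) \- e \*: (fmulr << b >> \o fmul << a >>)))) hz.
move=> _ [c [Pc ->]] /=; rewrite /fmulr !linearB linearZ /= !fmulU.
rewrite -opprD -opprB subr_linear_comb /e -Pb -Pc.
by apply/inSpanN/inSpan_mem; exists Hole, a, b, c.
Qed.

Arguments prelie_fmul_bracket x {P1 P2 y z}.

Fixpoint rmul_lie (t : tree) (k : tree) : V :=
  match t with
  | Leaf i => << Node k (Leaf i) >>
  | Node l r => linext (rmul_lie r) (rmul_lie l k)
                - koszul l r *: linext (rmul_lie l) (rmul_lie r k)
  end.

Lemma rmul_lie_lnorm_span t k : lnorm_span k (leaves t) (rmul_lie t k).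
Proof.
elim: t k => [i|l IHl r IHr] k /=.
  by apply: inSpan_mem; exists [:: i].
apply/inSpanB/inSpanZ; first exact: linext_lnorm_span.
by apply: (lnorm_span_perm (permEl (perm_catC _ _))); apply: linext_lnorm_span.
Qed.

Lemma fmul_iota_lie t v : v ** il t ≡ linext (rmul_lie t) v.
Proof.
elim: t v => [i|l IHl r IHr] v.
  have -> : linext (rmul_lie (Leaf i)) v = v ** << Leaf i >>.
    by rewrite /fmul; apply: eq_linext => k; rewrite linextU.
  by rewrite iota_lie_leaf subrr; apply: inSpan0.
apply: (inSpan_linear_basis
  (fmulr (il (Node l r)) \- linext (rmul_lie (Node l r)))) => a /=.
rewrite /fmulr linextU iota_lie_node.
apply: (eqv_trans _ (prelie_fmul_bracket _ (iota_lie_homogeneous l)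
  (iota_lie_homogeneous r))).
have := IHl << a >>; have := IHr << a >>; rewrite !linextU => Jr Jl.
apply: eqv_linear_comb.
  by apply: (eqv_trans (rmul_lie l a ** il r)); [apply: eqv_fmulr | apply: IHr].
by apply: (eqv_trans (rmul_lie r a ** il l)); [apply: eqv_fmulr | apply: IHl].
Qed.

Lemma iota_lie_vert t : exists2 v, vert_span (leaves t) v & il t ≡ v.
Proof.
elim: t => [i|l [vl Vl Jl] r [vr Vr Jr]].
  exists << Leaf i >>; last by rewrite iota_lie_leaf subrr; apply: inSpan0.
  by apply: inSpan_mem; exists i, [::].
exists (linext (rmul_lie r) vl - koszul l r *: linext (rmul_lie l) vr).
  apply/inSpanB/inSpanZ.
    exact: (linext_vert_span (rmul_lie_lnorm_span r)).
  apply: (vert_span_perm (permEl (perm_catC _ _))).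
  exact: (linext_vert_span (rmul_lie_lnorm_span l)).
rewrite iota_lie_node; apply: eqv_linear_comb.
  by apply: (eqv_trans (vl ** il r)); [apply: eqv_fmulr | apply: fmul_iota_lie].
by apply: (eqv_trans (vr ** il l)); [apply: eqv_fmulr | apply: fmul_iota_lie].
Qed.

Lemma prelie_ideal_in_vert_mod n x :
  prelie_ideal x -> in_vert_mod_prelie K p n x.
Proof. by apply: inSpan_trans => u Ju; apply: inSpan_mem; right. Qed.

Lemma vert_span_in_vert_mod n v :
  vert_span (iota 0 n) v -> in_vert_mod_prelie K p n v.
Proof.
apply: inSpan_trans => _ [i [s [eq_s ->]]].
by apply: inSpan_mem; left; exists i, s.
Qed.

End PreLie.

Theorem lemma5p5 (K : fieldType) (n : nat) (hn : (1 <= n)%N) (p : bool)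
  (x : FM K) :
  inSpan K (lie_mon K p n) x -> in_vert_mod_prelie K p n x.
Proof.
apply: inSpan_trans => _ [t [leaves_t ->]].
have [v Vv Jv] := iota_lie_vert K p t.
rewrite -(subrK v (iota_lie K p t)); apply: inSpanD.
  exact: prelie_ideal_in_vert_mod.
exact/vert_span_in_vert_mod/(vert_span_perm leaves_t).
Qed.
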